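(* Let $H$ be a bigraph and $a,c$ distinct vertices of $H$. The vertex $(a,c)$ of $H^+$ is implied by some non-trivial strong component $S$ of $H^+$ (i.e. $(a,c)\notin S$ and some vertex of $S$ has an arc to $(a,c)$) if and only if $H$ contains an induced path $a,b,c,d,e$ with $N(a)\subseteq N(c)$. Moreover, if such a path exists, then the non-trivial strong component implying $(a,c)$ contains the pairs $(a,d),(a,e),(b,d),(b,e)$.
   Context: A bigraph is a bipartite graph $H$ with fixed bipartition $(B,W)$ (black/white colours); $N(x)$ is the neighbourhood of $x$ in $H$. The pair-digraph $H^+$ has vertices all ordered pairs $(u,v)$ of distinct vertices of $H$, and arcs $(u,v)\to(u',v)$ whenever $u,v$ have the same colour, $uu'\in E(H)$, $vu'\notin E(H)$, and $(u,v)\to(u,v')$ whenever $u,v$ have different colours, $vv'\in E(H)$, $uv\notin E(H)$. A strong component is non-trivial if it has more than one vertex. *)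

From mathcomp Require Import all_boot.
Set Implicit Arguments. Unset Strict Implicit. Unset Printing Implicit Defensive.

(* A bigraph: vertex set a finType T, colouring col : T -> bool
   (true = black, false = white), edge relation E : rel T which is
   symmetric and only joins vertices of different colours. *)
Definition bigraph (T : finType) (col : T -> bool) (E : rel T) : Prop :=
  symmetric E /\ (forall x y, E x y -> col x != col y).

Section PairDigraph.
Variables (T : finType) (col : T -> bool) (E : rel T).

Definition pvert (p : T * T) : bool := p.1 != p.2.

Definition parc : rel (T * T) := fun p q =>
  [&& pvert p, pvert q &
   if col p.1 == col p.2 then
     (q.2 == p.2) && E p.1 q.1 && ~~ E p.2 q.1
   else
     (q.1 == p.1) && E p.2 q.2 && ~~ E p.1 q.2].

Definition scc (x : T * T) : {set T * T} :=
  [set y | connect parc x y && connect parc y x].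

Definition nontrivial_scc (S : {set T * T}) : Prop :=
  (exists2 x, pvert x & S = scc x) /\ 1 < #|S|.

Definition scc_implies (S : {set T * T}) (p : T * T) : Prop :=
  p \notin S /\ exists2 x, x \in S & parc x p.

Definition induced_path5 (a b c d e : T) : Prop :=
  [/\ uniq [:: a; b; c; d; e],
      [&& E a b, E b c, E c d & E d e] &
      ~~ [|| E a c, E a d, E a e, E b d, E b e | E c e]].

Definition nbhd_sub (x y : T) : Prop := forall z, E x z -> E y z.
End PairDigraph.

From mathcomp Require Import all_boot.

(* Arcs of H^+ alternate between pairs of equal and of different colours, and
   the head of an arc determines its tail up to one coordinate.  Every vertex of
   a non-trivial strong component S has an in-neighbour in S, so walking
   backwards inside S from an arc (a,d) -> (a,c) yields pairs (b,d) and (b,e)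
   whose arcs spell out an induced path a,b,c,d,e; any other shape of these
   predecessors, and any neighbour of a outside N(c), would give a path from
   (a,c) back into S.  Conversely, for such a path (a,d),(a,e),(b,e),(b,d) is a
   directed cycle with an arc (a,d) -> (a,c), and N(a) <= N(c) makes (a,c) a
   sink of H^+. *)

Set Implicit Arguments.
Unset Strict Implicit.
Unset Printing Implicit Defensive.

Section StrongComponents.
Variables (T : finType) (e : rel T).

Definition strong_comp (x : T) : {set T} :=
  [set y | connect e x y && connect e y x].

Lemma connect_last x y :
  connect e x y -> x != y -> exists2 z, connect e x z & e z y.
Proof.
move=> /connectP[p xp ->]; case/lastP: p xp => [|p z] /=; first by rewrite eqxx.
rewrite rcons_path last_rcons => /andP[xp ez] _.
by exists (last x p) => //; apply/connectP; exists p.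
Qed.

Lemma connect_sink x y : (forall z, ~~ e x z) -> connect e x y -> y = x.
Proof.
by move=> sink /connectP[[|z p] //= /andP[exz _]]; rewrite (negbTE (sink z)) in exz.
Qed.

Lemma strong_comp_between x u v y : u \in strong_comp x -> v \in strong_comp x ->
  connect e u y -> connect e y v -> y \in strong_comp x.
Proof.
rewrite !inE => /andP[xu _] /andP[_ vx] uy yv.
by rewrite (connect_trans xu uy) (connect_trans yv vx).
Qed.

Lemma strong_comp_pred x y : 1 < #|strong_comp x| -> y \in strong_comp x ->
  exists2 z, z \in strong_comp x & e z y.
Proof.
move=> /card_gt1P[u [v [uS vS neq_uv]]] yS.
have [w wS neq_wy] : exists2 w, w \in strong_comp x & w != y.
  by case: (eqVneq u y) => [eq_uy|]; [exists v; rewrite // -eq_uy eq_sym | exists u].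
have wy : connect e w y.
  by move: wS yS; rewrite !inE => /andP[_ wx] /andP[xy _]; apply: connect_trans wx xy.
have [z wz zy] := connect_last wy neq_wy.
by exists z => //; apply: strong_comp_between wS yS wz (connect1 zy).
Qed.

End StrongComponents.

Section PairDigraphArcs.
Variables (T : finType) (col : T -> bool) (E : rel T).
Hypothesis HB : bigraph col E.

Lemma col_adj x y : E x y -> col y = ~~ col x.
Proof. by case: HB => _ /(_ x y) h /h; case: (col x); case: (col y). Qed.

Lemma adjC x y : E x y = E y x.
Proof. by case: HB. Qed.

Lemma nadj_col x y : col x = col y -> ~~ E x y.
Proof. by move=> cxy; apply/negP => /col_adj; rewrite cxy; case: (col y). Qed.

Lemma neq_col x y : col x != col y -> x != y.
Proof. by apply: contraNneq => ->. Qed.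

Lemma neq_adj x y z : E x z -> ~~ E y z -> x != y.
Proof. by move=> xz; apply: contraNneq => <-. Qed.

Lemma adj_neq x y : E x y -> x != y.
Proof. by move=> /col_adj cy; apply: neq_col; rewrite cy; case: (col x). Qed.

Lemma parc_same u v u' : col u = col v -> u != v -> u' != v ->
  E u u' -> ~~ E v u' -> parc col E (u, v) (u', v).
Proof. by move=> cuv uv u'v uu' vu'; rewrite /parc /pvert /= cuv uv u'v !eqxx uu'. Qed.

Lemma parc_diff u v v' : col u != col v -> u != v -> u != v' ->
  E v v' -> ~~ E u v' -> parc col E (u, v) (u, v').
Proof.
by move=> cuv uv uv' vv' nuv'; rewrite /parc /pvert /= (negbTE cuv) uv uv' !eqxx vv'.
Qed.

Lemma parc_into_same x y u v : parc col E (x, y) (u, v) -> col u = col v ->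
  [/\ x = u, E y v & ~~ E u v].
Proof.
case/and3P=> _ _ /=; case: ifP => [/eqP cxy /andP[/andP[/eqP -> /col_adj]] | _].
  by rewrite -cxy => -> _ cuv; move: cuv; case: (col x).
by case/andP=> /andP[/eqP -> ->] ->.
Qed.

Lemma parc_into_diff x y u v : parc col E (x, y) (u, v) -> col u != col v ->
  [/\ y = v, E x u & ~~ E v u].
Proof.
case/and3P=> _ _ /=; case: ifP => [_ | /negbT cxy /andP[/andP[/eqP -> /col_adj]]].
  by case/andP=> /andP[/eqP -> ->] ->.
by move=> -> _; move: cxy; case: (col x); case: (col y).
Qed.

Lemma parc_sink a c : col a = col c -> nbhd_sub E a c ->
  forall q, ~~ parc col E (a, c) q.
Proof.
move=> cac sub q; apply/negP=> /and3P[_ _].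
by rewrite /= cac eqxx => /andP[/andP[_ /sub ->]].
Qed.

Lemma mem_scc_self x : x \in scc col E x.
Proof. by rewrite inE connect0. Qed.

End PairDigraphArcs.

Section InducedPaths.
Variables (T : finType) (col : T -> bool) (E : rel T).
Hypothesis HB : bigraph col E.

Lemma induced_path5_of_adj a b c d e :
  E a b -> E b c -> E c d -> E d e ->
  ~~ E a c -> ~~ E a d -> ~~ E a e -> ~~ E b d -> ~~ E b e -> ~~ E c e ->
  induced_path5 E a b c d e.
Proof.
move=> ab bc cd de nac nad nae nbd nbe nce.
have adjC := adjC HB.
have ca : c != a := neq_adj cd nad.
have da : d != a by apply: (neq_adj (E := E) (z := c)); rewrite // adjC.
have ea : e != a by apply: (neq_adj (E := E) (z := d)); rewrite // adjC.
have bd : b != d by apply: (neq_adj (E := E) (z := a)); rewrite adjC.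
have eb : e != b by apply: (neq_adj (E := E) (z := d)); rewrite // adjC.
have ce : c != e by apply: (neq_adj (E := E) (z := b)); rewrite adjC.
split; last by rewrite !negb_or nac nad nae nbd nbe nce.
  rewrite /= !inE !negb_or (adj_neq HB ab) (adj_neq HB bc).
  by rewrite (adj_neq HB cd) (adj_neq HB de) ![a == _]eq_sym ca da ea bd (eq_sym b) eb ce.
by rewrite ab bc cd de.
Qed.

Lemma induced_path5_cols a b c d e : induced_path5 E a b c d e ->
  [/\ col b = ~~ col a, col c = col a, col d = ~~ col a & col e = col a].
Proof.
case=> _ /and4P[/(col_adj HB) cb /(col_adj HB) cc /(col_adj HB) cd /(col_adj HB) ce] _.
by rewrite ce cd cc cb !negbK.
Qed.

Lemma induced_path5_arcs a b c d e : induced_path5 E a b c d e ->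
  [/\ parc col E (a, d) (a, e), parc col E (a, e) (b, e), parc col E (b, e) (b, d),
      parc col E (b, d) (a, d) & parc col E (a, d) (a, c)].
Proof.
move=> path; have [cb _ cd ce] := induced_path5_cols path.
case: path => _ /and4P[ab _ cd' de].
rewrite !negb_or => /and5P[nac nad nae nbd /andP[nbe _]].
have adjC := adjC HB.
have ad : a != d by apply: (neq_col (col := col)); rewrite cd; case: (col a).
have be : b != e by apply: (neq_col (col := col)); rewrite cb ce; case: (col a).
have ae : a != e by apply: (neq_adj (E := E) (z := b)); rewrite // adjC.
have bd : b != d by apply: (neq_adj (E := E) (z := a)); rewrite adjC.
have ac : a != c by rewrite eq_sym; apply: (neq_adj (E := E) (z := d)).
split.
- by apply: parc_diff; rewrite // ?cd; case: (col a).
- by apply: parc_same; rewrite // adjC.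
- by apply: parc_diff; rewrite // ?cb ?ce ?(adjC e); case: (col a).
- by apply: parc_same; rewrite // ?cb ?cd // adjC.
- by apply: parc_diff; rewrite // ?cd ?(adjC d); case: (col a).
Qed.

Lemma induced_path5_scc a b c d e : induced_path5 E a b c d e -> nbhd_sub E a c ->
  [/\ nontrivial_scc col E (scc col E (a, d)), scc_implies col E (scc col E (a, d)) (a, c) &
      [/\ (a, d) \in scc col E (a, d), (a, e) \in scc col E (a, d),
          (b, d) \in scc col E (a, d) & (b, e) \in scc col E (a, d)]].
Proof.
move=> path sub; have [_ cc cd ce] := induced_path5_cols path.
have [ad_ae ae_be be_bd bd_ad ad_ac] := induced_path5_arcs path.
have adS : (a, d) \in scc col E (a, d) := mem_scc_self col E (a, d).
have inS y : connect (parc col E) (a, d) y -> connect (parc col E) y (a, d) ->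
    y \in scc col E (a, d).
  exact: (strong_comp_between adS adS).
have c1 := connect1 ad_ae; have c2 := connect1 ae_be.
have c3 := connect1 be_bd; have c4 := connect1 bd_ad.
have aeS := inS _ c1 (connect_trans c2 (connect_trans c3 c4)).
have beS := inS _ (connect_trans c1 c2) (connect_trans c3 c4).
have bdS := inS _ (connect_trans c1 (connect_trans c2 c3)) c4.
split=> //.
- split.
    by exists (a, d) => //; apply: (neq_col (col := col)); rewrite cd; case: (col a).
  apply/card_gt1P; exists (a, d), (a, e); split=> //.
  by rewrite xpair_eqE eqxx /=; apply: (neq_col (col := col)); rewrite cd ce; case: (col a).
- split; last by exists (a, d).
  apply/negP; rewrite inE => /andP[_ /(connect_sink (parc_sink (esym cc) sub))] [dc].
  by move: cd; rewrite dc cc; case: (col a).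
Qed.

End InducedPaths.

Section ImpliedVertex.
Variables (T : finType) (col : T -> bool) (E : rel T).
Hypothesis HB : bigraph col E.
Variables (x0 x : T * T) (a c : T).
Hypotheses (scc_gt1 : 1 < #|scc col E x0|) (ac_notin : (a, c) \notin scc col E x0).
Hypotheses (xS : x \in scc col E x0) (x_ac : parc col E x (a, c)).

Lemma implied_unreachable y : y \in scc col E x0 -> ~~ connect (parc col E) (a, c) y.
Proof.
by move=> yS; apply: contra ac_notin; apply: strong_comp_between xS yS (connect1 x_ac).
Qed.

Lemma implied_col : col a = col c.
Proof.
case: (eqVneq (col a) (col c)) => // cac; exfalso.
case: x xS x_ac => x1 x2 x1S /(parc_into_diff HB)/(_ cac)[ex2 ax1 _]; subst x2.
have cx1 : col x1 = col c.
  by move: cac; rewrite (col_adj HB ax1); case: (col x1); case: (col c).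
have [[z1 z2] zS /(parc_into_same HB)/(_ cx1)[ez1 z2c _]] := strong_comp_pred scc_gt1 x1S.
subst z1.
have cz2 : col z2 = ~~ col c by rewrite (col_adj HB z2c) negbK.
have cx1z2 : col x1 != col z2 by rewrite cx1 cz2; case: (col c).
have [[? ?] _ /(parc_into_diff HB)/(_ cx1z2)[_ _ nz2x1]] := strong_comp_pred scc_gt1 zS.
have ca : col a = col z2 by move: cac; rewrite cz2; case: (col a); case: (col c).
have az2 : a != z2 by apply: (neq_adj (E := E) (z := x1)); rewrite // (adjC HB).
have ac_az2 : parc col E (a, c) (a, z2).
  by apply: parc_diff; rewrite // ?(adjC HB c) // ?(neq_col cac) ?(nadj_col HB ca).
have az2_x1z2 : parc col E (a, z2) (x1, z2).
  by apply: parc_same; rewrite // ?(adjC HB a) //; apply: neq_col cx1z2.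
move/negP: (implied_unreachable zS); apply.
exact: connect_trans (connect1 ac_az2) (connect1 az2_x1z2).
Qed.

Lemma implied_nbhd_sub : nbhd_sub E a c.
Proof.
have cac := implied_col.
case: x xS x_ac => x1 d dS /(parc_into_same HB)/(_ cac)[ex1 dc _]; subst x1.
have cd : col d = ~~ col c by rewrite (col_adj HB dc) negbK.
have cad : col a != col d by rewrite cd cac; case: (col c).
have [[? ?] _ /(parc_into_diff HB)/(_ cad)[_ _ nda]] := strong_comp_pred scc_gt1 dS.
move=> t Eat; apply/negPn/negP => nct.
have ct : col t = col d by rewrite (col_adj HB Eat) cd cac.
have ctc : col t != col c by rewrite ct cd; case: (col c).
have td : t != d by apply: (neq_adj (E := E) (z := a)); rewrite // (adjC HB).
have ac_tc : parc col E (a, c) (t, c).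
  by apply: parc_same; rewrite // ?(neq_col ctc) //; apply: neq_adj Eat nct.
have tc_td : parc col E (t, c) (t, d).
  by apply: parc_diff; rewrite // ?(neq_col ctc) ?(nadj_col HB ct) // (adjC HB).
have td_ad : parc col E (t, d) (a, d).
  by apply: parc_same; rewrite // ?(neq_col cad) // (adjC HB).
move/negP: (implied_unreachable dS); apply.
exact: connect_trans (connect1 ac_tc) (connect_trans (connect1 tc_td) (connect1 td_ad)).
Qed.

Lemma implied_induced_path : exists b d e, induced_path5 E a b c d e.
Proof.
have cac := implied_col; have sub := implied_nbhd_sub.
case: x xS x_ac => x1 d dS /(parc_into_same HB)/(_ cac)[ex1 dc nac]; subst x1.
have cd : col d = ~~ col a by rewrite cac (col_adj HB dc) negbK.
have cad : col a != col d by rewrite cd; case: (col a).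
have [[b d'] bS /(parc_into_diff HB)/(_ cad)[ed' ba nda]] := strong_comp_pred scc_gt1 dS.
subst d'; have ab : E a b by rewrite (adjC HB).
have cbd : col b = col d by rewrite (col_adj HB ab) cd.
have [[b' e] eS /(parc_into_same HB)/(_ cbd)[eb' ed nbd]] := strong_comp_pred scc_gt1 bS.
subst b'; have de : E d e by rewrite (adjC HB).
have ce : col e = col a by rewrite (col_adj HB de) cd negbK.
have cbe : col b != col e by rewrite cbd cd ce; case: (col a).
have [[? ?] _ /(parc_into_diff HB)/(_ cbe)[_ _ neb]] := strong_comp_pred scc_gt1 eS.
exists b, d, e; apply: (induced_path5_of_adj HB); rewrite // 1?(adjC HB) //.
- exact: sub.
- exact: (nadj_col HB ce).
- exact: (nadj_col HB (etrans ce cac)).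
Qed.

End ImpliedVertex.

Theorem lemma2p6 (T : finType) (col : T -> bool) (E : rel T)
  (HB : bigraph col E) (a c : T) (hac : a != c) :
  ((exists S : {set T * T},
      nontrivial_scc col E S /\ scc_implies col E S (a, c)) <->
   (exists b d e : T, induced_path5 E a b c d e /\ nbhd_sub E a c))
  /\
  (forall b d e : T, induced_path5 E a b c d e -> nbhd_sub E a c ->
     exists S : {set T * T},
       [/\ nontrivial_scc col E S, scc_implies col E S (a, c) &
           [/\ (a, d) \in S, (a, e) \in S, (b, d) \in S & (b, e) \in S]]).
Proof.
split; last first.
  by move=> b d e path sub; exists (scc col E (a, d)); apply: induced_path5_scc.
split=> [[S [[[x0 _ ->] gt1] [notin [x xS xac]]]] | [b [d [e [path sub]]]]].
- have [b [d [e path]]] := implied_induced_path HB gt1 notin xS xac.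
  by exists b, d, e; split; last exact: (implied_nbhd_sub HB gt1 notin xS xac).
- have [? ? _] := induced_path5_scc HB path sub.
  by exists (scc col E (a, d)).
Qed.
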